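(* Let $C>0$ and let $\mathcal{T}$ be a set of $C$-nice $(k,p)$-trees, no two of which are identical. Then $$\mathrm{b}_k(p)^{1/p}\geq\frac{p}{e\cdot C^2}\,|\mathcal{T}|^{1/p}.$$
   Context: A $(k,p)$-tree is a rooted plane tree (children of each node ordered left to right) with exactly $p$ leaves, each at distance exactly $k+1$ from the root. Two $(k,p)$-trees are identical if one is obtained from the other by renaming vertices while preserving the root, adjacency, and the left-to-right order of children of every node. For a rooted tree $T$, $\mathrm{Tran}(T)=\prod_{u\in V(T)}|r_u|!$, where $|r_u|$ is the number of children of $u$; $T$ is $C$-nice if $\mathrm{Tran}(T)\leq C^p$. $\mathrm{b}_k(p)$ is the number of $k$-level partitions $(T_1,\dots,T_k)$ of $[p]$ ($T_1$ a partition of $[p]$ into nonempty parts, $T_i$ a refinement of $T_{i-1}$). *)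

From mathcomp Require Import all_boot all_order all_algebra.
From mathcomp Require Import all_classical all_reals all_analysis.
Set Implicit Arguments. Unset Strict Implicit. Unset Printing Implicit Defensive.
Import Order.TTheory GRing.Theory Num.Theory.

(* Rooted plane trees up to identity (renaming preserving root, adjacency and
   left-to-right order of children): a node is the ordered list of its
   children's subtrees.  Two trees are "identical" iff they are equal terms. *)
Inductive ptree : Type := Node of seq ptree.

Fixpoint leafdepths (t : ptree) : seq nat :=
  match t with
  | Node cs =>
      if cs is [::] then [:: 0%N]
      else flatten (map (fun c => map S (leafdepths c)) cs)
  end.

Definition is_kp_tree (k p : nat) (t : ptree) : bool :=
  (size (leafdepths t) == p) && all (fun d => d == k.+1) (leafdepths t).

Fixpoint tran (t : ptree) : nat :=
  match t with
  | Node cs => (size cs)`! * foldr (fun c acc => tran c * acc) 1%N cs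
  end.

Definition nice (R : realType) (C : R) (p : nat) (t : ptree) : bool :=
  ((tran t)%:R <= C ^+ p)%R.

Definition pairwise_distinct (s : seq ptree) : Prop :=
  forall i j : nat, (i < size s)%N -> (j < size s)%N ->
    nth (Node [::]) s i = nth (Node [::]) s j -> i = j.

Definition refines (p : nat) (Q P : {set {set 'I_p}}) : bool :=
  [forall B in Q, [exists A in P, B \subset A]].

(* k-level partitions (T_1,...,T_k) of [p] = {0,..,p-1}: each T_i is a partition
   of [p] into nonempty parts (finset's [partition], which excludes set0), and
   T_{i+1} refines T_i.  Levels are indexed by 'I_k (T_1 is index 0). *)
Definition klevel_partition (k p : nat) (f : {ffun 'I_k -> {set {set 'I_p}}}) : bool :=
  [forall i, finset.partition (f i) [set: 'I_p]] &&
  [forall i : 'I_k, forall j : 'I_k, ((nat_of_ord i).+1 == nat_of_ord j) ==> refines (f j) (f i)].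

Definition bk (k p : nat) : nat :=
  #|[set f : {ffun 'I_k -> {set {set 'I_p}}} | @klevel_partition k p f]|.

From HB Require Import structures.
From mathcomp Require Import all_boot all_order all_algebra.
From mathcomp Require Import reals sequences exp.
From mathcomp Require Import ring.
Import Order.TTheory GRing.Theory Num.Theory.
Set Implicit Arguments. Unset Strict Implicit. Unset Printing Implicit Defensive.

(* Label the leaves of a (k,p)-tree t bijectively by [p] and record, for each
   depth 1 <= i <= k, the partition of [p] into the label sets below the nodes
   of depth i: this is a k-level partition.  The labelled plane trees giving a
   fixed k-level partition are obtained from one of them by reordering the
   children of its nodes, so there are exactly Tran(t) of them; hence
   \sum_t p!/Tran(t) <= b_k(p) over distinct (k,p)-trees.  We prove this bound
   for every label set S by induction on k, cutting trees at the root: ordered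
   lists of j subtrees are matched with ordered lists of j blocks of S, each
   carrying a k-level partition, and these overcount the partitions of S into
   j decorated blocks by a factor j!.  For C-nice trees the bound gives
   |T| p!/C^p <= b_k(p), and p! >= (p/e)^p together with C^p >= 1 yields the
   claim after taking p-th roots. *)

Fixpoint gentree_of_ptree (t : ptree) : GenTree.tree unit :=
  let: Node cs := t in GenTree.Node 0 (map gentree_of_ptree cs).

Fixpoint ptree_of_gentree (g : GenTree.tree unit) : ptree :=
  match g with
  | GenTree.Leaf _ => Node [::]
  | GenTree.Node _ gs => Node (map ptree_of_gentree gs)
  end.

Lemma gentree_of_ptreeK : cancel gentree_of_ptree ptree_of_gentree.
Proof.
red; fix IH 1 => -[cs] /=; congr Node.
by elim: cs => //= c cs IHcs; rewrite IH IHcs.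
Qed.

HB.instance Definition _ := Countable.copy ptree (can_type gentree_of_ptreeK).

Lemma ptree_mem_ind (P : ptree -> Prop) :
  (forall cs, (forall c, c \in cs -> P c) -> P (Node cs)) -> forall t, P t.
Proof.
move=> IHP; fix IH 1 => -[cs]; apply: IHP.
(* [done] would close the nil case with the unguarded [IH]. *)
elim: cs => [|c cs IHcs] x; first (rewrite in_nil; discriminate).
rewrite inE => /predU1P[x_c | x_cs]; last exact: IHcs.
rewrite x_c; exact: IH.
Qed.

Definition nleaves (t : ptree) : nat := size (leafdepths t).

Definition leaves_at (d : nat) (t : ptree) : bool := all (pred1 d) (leafdepths t).

Notation leaf := (Node [::]).

Lemma all_flatten (T : Type) (a : pred T) (ss : seq (seq T)) :
  all a (flatten ss) = all (all a) ss.
Proof. by elim: ss => //= s ss IH; rewrite all_cat IH. Qed.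

Lemma leafdepths_cons c cs :
  leafdepths (Node (c :: cs)) = flatten [seq map S (leafdepths c') | c' <- c :: cs].
Proof. by []. Qed.

Lemma nleaves_gt0 t : (0 < nleaves t)%N.
Proof.
elim/ptree_mem_ind: t => -[|c cs] IH //.
rewrite /nleaves leafdepths_cons /= size_cat size_map.
by rewrite ltn_addr // IH ?mem_head.
Qed.

Lemma nleaves_Node cs : cs != [::] -> nleaves (Node cs) = sumn (map nleaves cs).
Proof.
case: cs => // c cs _; rewrite /nleaves leafdepths_cons size_flatten /shape -map_comp.
by congr sumn; apply: eq_map => c' /=; rewrite size_map.
Qed.

Lemma leaves_atS d cs :
  leaves_at d.+1 (Node cs) = (cs != [::]) && all (leaves_at d) cs.
Proof.
case: cs => // c cs; rewrite /leaves_at leafdepths_cons all_flatten all_map.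
by apply: eq_all => c' /=; rewrite all_map.
Qed.

Lemma leaves_at0 t : leaves_at 0 t -> t = leaf.
Proof.
case: t => -[|c cs] //; rewrite /leaves_at leafdepths_cons /= all_cat all_map.
by case/andP; have := nleaves_gt0 c; rewrite /nleaves; case: (leafdepths c).
Qed.

Lemma leaves_at1 t : leaves_at 1 t -> t = Node (nseq (nleaves t) leaf).
Proof.
case: t => cs; rewrite leaves_atS => /andP[cs0 /allP cs_leaves].
have cs_nseq : cs = nseq (size cs) leaf.
  by apply/all_pred1P/allP => c /cs_leaves /leaves_at0 ->.
by rewrite nleaves_Node // {2}cs_nseq map_nseq sumn_nseq mul1n -cs_nseq.
Qed.

Lemma tranE cs : tran (Node cs) = ((size cs)`! * \prod_(c <- cs) tran c)%N.
Proof.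
by rewrite /=; congr (_ * _); elim: cs => [|c cs IH] /=; rewrite ?big_nil ?big_cons ?IH.
Qed.

Lemma tran_gt0 t : (0 < tran t)%N.
Proof.
elim/ptree_mem_ind: t => cs IH; rewrite tranE muln_gt0 fact_gt0 /=.
by rewrite big_seq prodn_cond_gt0.
Qed.

Lemma partition_bigcup (T : finType) (P : {set {set T}}) (S : {set T})
    (Q : {set T} -> {set {set T}}) :
  partition P S -> (forall B, B \in P -> partition (Q B) B) ->
  partition (\bigcup_(B in P) Q B) S.
Proof.
move=> partP partQ; apply/and3P; split.
- rewrite -(cover_partition partP); apply/eqP/setP => x.
  apply/bigcupP/bigcupP => [[X /bigcupP[B BP XQ] xX] | [B BP xB]].
    exists B => //; rewrite -(cover_partition (partQ B BP)).
    by apply/bigcupP; exists X.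
  move: xB; rewrite -(cover_partition (partQ B BP)) => /bigcupP[X XQ xX].
  by exists X => //; apply/bigcupP; exists B.
- apply/trivIsetP => X Y /bigcupP[B BP XQ] /bigcupP[B' B'P YQ] neqXY.
  have [eqBB'|neqBB'] := eqVneq B B'.
    by rewrite -eqBB' in YQ; exact: (trivIsetP (partition_trivIset (partQ B BP))).
  apply: disjointWl (partitionS (partQ B BP) XQ) _.
  apply: disjointWr (partitionS (partQ B' B'P) YQ) _.
  exact: (trivIsetP (partition_trivIset partP)).
- by apply/bigcupP => -[B BP]; rewrite (partition0 (partQ B BP)).
Qed.

Section KLevelPartitions.
Variable p : nat.
Notation blocks := {set {set 'I_p}}.

Definition klevel k (S : {set 'I_p}) : {set {ffun 'I_k -> blocks}} :=
  [set f : {ffun 'I_k -> blocks} | [forall i, partition (f i) S] &&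
     [forall i : 'I_k, forall j : 'I_k, (i.+1 == j) ==> refines (f j) (f i)]].

Lemma bkE k : bk k p = #|klevel k setT|.
Proof. by apply: eq_card => f; rewrite !inE. Qed.

Lemma card_klevel0 S : #|klevel 0 S| = 1%N.
Proof.
apply/eqP/cards1P; exists [ffun=> set0]; apply/setP => f; rewrite !inE.
apply/idP/eqP => [_|_]; first by apply/ffunP => -[].
by apply/andP; split; apply/forallP => -[].
Qed.

Lemma klevel_partition k S f i : f \in klevel k S -> partition (f i) S.
Proof. by rewrite inE => /andP[/forallP]. Qed.

Section Graft.
Variable k : nat.
Notation forest := {ffun {set 'I_p} -> {ffun 'I_k -> blocks}}.

Definition graft (x : blocks * forest) : {ffun 'I_k.+1 -> blocks} :=
  [ffun i => if unlift ord0 i is Some j then \bigcup_(B in x.1) x.2 B j else x.1].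

(* Outside the blocks of [x.1] the forest is the constant [set0] function, so
   that [graft] is injective. *)
Definition graftable (S : {set 'I_p}) : {set blocks * forest} :=
  [set x | partition x.1 S && (x.2 \in pfamily [ffun=> set0] x.1 (klevel k))].

Lemma graft0 x : graft x ord0 = x.1.
Proof. by rewrite ffunE unlift_none. Qed.

Lemma graft_lift x j : graft x (lift ord0 j) = \bigcup_(B in x.1) x.2 B j.
Proof. by rewrite ffunE liftK. Qed.

Lemma card_graftable S :
  #|graftable S| = (\sum_(P | partition P S) \prod_(B in P) #|klevel k B|)%N.
Proof.
rewrite -sum1_card (eq_bigl _ _ (fun x => in_set _ x)).
rewrite -(pair_big_dep (fun P => partition P S)
  (fun P (g : forest) => g \in pfamily [ffun=> set0] P (klevel k)) (fun _ _ => 1%N)).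
apply: eq_bigr => P _; rewrite sum1_card card_pfamily.
by rewrite foldrE big_image.
Qed.

Lemma graft_klevel S x : x \in graftable S -> graft x \in klevel k.+1 S.
Proof.
rewrite inE => /andP[partP /pfamilyP[_ /= x2_klevel]].
have partQ j B : B \in x.1 -> partition (x.2 B j) B.
  by move/x2_klevel; apply: klevel_partition.
rewrite inE; apply/andP; split.
  apply/forallP => i; have [j ->|->] := unliftP ord0 i; last by rewrite graft0.
  by rewrite graft_lift; apply: partition_bigcup (partQ j).
apply/forallP => i; apply/forallP => j; apply/implyP => /eqP ij.
have [j' ej|ej] := unliftP ord0 j; last by rewrite ej in ij.
rewrite ej graft_lift; apply/forallP => X; apply/implyP => /bigcupP[B BP XQ].
have [i' ei|ei] := unliftP ord0 i; rewrite ei; last first.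
  by rewrite graft0; apply/existsP; exists B; rewrite BP (partitionS (partQ j' B BP)).
rewrite graft_lift.
have i'j' : i'.+1 = j' by move: ij; rewrite ei ej /= /bump !leq0n !add1n => -[].
move: (x2_klevel B BP); rewrite inE => /andP[_ /forallP/(_ i')/forallP/(_ j')].
rewrite i'j' eqxx => /forallP/(_ X); rewrite XQ => /existsP[A /andP[AQ XA]].
by apply/existsP; exists A; rewrite XA andbT; apply/bigcupP; exists B.
Qed.

Lemma klevel_block S P (g : forest) B j :
    partition P S -> B \in P -> (forall B', B' \in P -> g B' \in klevel k B') ->
  g B j = [set X in \bigcup_(B' in P) g B' j | X \subset B].
Proof.
move=> partP BP g_klevel.
have partQ B' : B' \in P -> partition (g B' j) B' by move/g_klevel/klevel_partition.
apply/setP => X; rewrite inE; apply/idP/andP => [XQ | [/bigcupP[B' B'P XQ] XB]].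
  by split; [apply/bigcupP; exists B | apply: partitionS (partQ B BP) XQ].
have [<- //|neqB'B] := eqVneq B' B.
have disjB'B : [disjoint B' & B] by apply: (trivIsetP (partition_trivIset partP)).
case/set0Pn: (partition_neq0 (partQ B' B'P) XQ) => y yX.
have XB' := partitionS (partQ B' B'P) XQ.
by have := subsetP XB y yX; rewrite (disjointFr disjB'B (subsetP XB' y yX)).
Qed.

Lemma graft_inj S : {in graftable S &, injective graft}.
Proof.
move=> [P g] [P' g']; rewrite !inE /=.
move=> /andP[partP /pfamilyP[/supportP g_supp g_klevel]].
move=> /andP[_ /pfamilyP[/supportP g'_supp g'_klevel]] eq_graft.
have eqPP' : P = P' by rewrite -[P](graft0 (P, g)) eq_graft graft0.
subst P'; congr pair; apply/ffunP => B.
have [BP|BnP] := boolP (B \in P); last by rewrite g_supp ?g'_supp.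
apply/ffunP => j; rewrite (klevel_block j partP BP g_klevel).
rewrite (klevel_block j partP BP g'_klevel).
by rewrite -!(graft_lift (P, _)) eq_graft.
Qed.

Lemma sum_partition_prod_klevel_le S :
  (\sum_(P | partition P S) \prod_(B in P) #|klevel k B| <= #|klevel k.+1 S|)%N.
Proof.
rewrite -card_graftable -(card_in_imset (@graft_inj S)); apply: subset_leq_card.
by apply/subsetP => f /imsetP[x x_graftable ->]; apply: graft_klevel.
Qed.
End Graft.
End KLevelPartitions.

Lemma leq_sum_inj (I J : finType) (A : pred I) (B : pred J) (h : I -> J)
    (f : I -> nat) (g : J -> nat) :
    {in A &, injective h} -> (forall x, A x -> B (h x) /\ g (h x) = f x) ->
  (\sum_(x | A x) f x <= \sum_(y | B y) g y)%N.
Proof.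
move=> h_inj hAB; rewrite (eq_bigr (g \o h)); last by move=> x /hAB[].
rewrite -(big_imset _ h_inj) /=.
apply: (sub_le_big leqnn (fun m n => leq_addr n m)) => y.
by case/imsetP => x xA ->; case: (hAB x xA).
Qed.

Section Decorations.
Variables p k : nat.
Notation blocks := {set {set 'I_p}}.

(* The number of sequences of [m] nonempty disjoint blocks covering [S], each
   block [B] carrying one of the [#|klevel k B|] k-level partitions of [B]. *)
Fixpoint ordered_decorations (S : {set 'I_p}) (m : nat) : nat :=
  if m is m'.+1 then
    \sum_(B : {set 'I_p} | (B \subset S) && (B != set0))
      #|klevel k B| * ordered_decorations (S :\: B) m'
  else S == set0.

Definition decorated_partitions (S : {set 'I_p}) (m : nat) : nat :=
  \sum_(P | partition P S && (#|P| == m)) \prod_(B in P) #|klevel k B|.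

Lemma partition_setU1D (S B : {set 'I_p}) (P : blocks) :
    B \subset S -> B != set0 -> partition P (S :\: B) ->
  partition (B |: P) S /\ B \notin P.
Proof.
move=> BS B_neq0 partP; split; last first.
  apply: contra B_neq0 => /(partitionS partP).
  by rewrite subsetD -setI_eq0 setIid => /andP[].
have -> : S = B :|: (S :\: B).
  by apply/setP => x; rewrite !inE; case: (boolP (x \in B)) => //= /(subsetP BS) ->.
by apply: partitionU1; rewrite // -setI_eq0 setDE setICA setICr setI0.
Qed.

Lemma ordered_decorations_le m S :
  (ordered_decorations S m <= m`! * decorated_partitions S m)%N.
Proof.
elim: m S => [|m IH] S /=.
  rewrite mul1n; have [->|//] := eqVneq S set0.
  rewrite /decorated_partitions (bigD1 set0) /=; last by rewrite partition_set0 cards0 !eqxx.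
  by rewrite big_set0 leq_addr.
apply: (@leq_trans (\sum_(B : {set 'I_p} | (B \subset S) && (B != set0))
    #|klevel k B| * (m`! * decorated_partitions (S :\: B) m))).
  by apply: leq_sum => B _; rewrite leq_mul2l IH orbT.
rewrite factS -mulnA; under eq_bigr do rewrite mulnCA.
rewrite -big_distrr /= mulnCA leq_mul2l; apply/orP; right.
under eq_bigr do rewrite /decorated_partitions big_distrr /=.
rewrite pair_big_dep /= /decorated_partitions big_distrr /=.
under [X in _ <= X]eq_bigr => P /andP[_ /eqP <-] do
  rewrite -sum1_card big_distrl /= mul1n.
rewrite pair_big_dep /=.
apply: (leq_sum_inj (h := fun x : {set 'I_p} * blocks => (x.1 |: x.2, x.1))).
  move=> [B P] [B' P'] /and3P[/andP[/= BS B_neq0] partP _] /and3P[_ partP' _] [eqU eqB].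
  subst B'.
  have [_ BnP] := partition_setU1D BS B_neq0 partP.
  have [_ BnP'] := partition_setU1D BS B_neq0 partP'.
  by congr pair; rewrite -(setU1K BnP) eqU setU1K.
move=> [B P] /and3P[/andP[/= BS B_neq0] partP /eqP cardP].
have [partBP BnP] := partition_setU1D BS B_neq0 partP.
by rewrite partBP cardsU1 BnP cardP setU11 add1n eqxx big_setU1.
Qed.

Lemma sum_decorated_partitions_le (S : {set 'I_p}) :
  (\sum_(j < #|S|.+1) decorated_partitions S j <= #|klevel k.+1 S|)%N.
Proof.
apply: leq_trans (sum_partition_prod_klevel_le k S).
rewrite [X in (_ <= X)%N](partition_big (fun P : blocks => inord #|P| : 'I_#|S|.+1) xpredT) //=.
apply: leq_sum => j _; apply: eq_leq; apply: eq_bigl => P.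
have [partP|] //= := boolP (partition P S).
have cardP : (#|P| <= #|S|)%N.
  rewrite (card_partition partP) -sum1_card; apply: leq_sum => A AP.
  by rewrite card_gt0 (partition_neq0 partP).
by rewrite -val_eqE /= inordK ?ltnS.
Qed.
End Decorations.

Local Open Scope ring_scope.

Lemma ler_sum_uniq_subset (R : numDomainType) (T : eqType) (s s' : seq T)
    (F : T -> R) :
    uniq s -> uniq s' -> {subset s <= s'} -> (forall x, 0 <= F x) ->
  \sum_(x <- s) F x <= \sum_(x <- s') F x.
Proof.
move=> us us' ss' F_ge0.
have -> : \sum_(x <- s) F x = \sum_(x <- s' | x \in s) F x.
  rewrite -[RHS]big_filter; apply: perm_big; apply: uniq_perm; rewrite ?filter_uniq // => x.
  by rewrite mem_filter andb_idr //; apply: ss'.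
by rewrite [X in _ <= X](bigID (mem s)) lerDl sumr_ge0.
Qed.

Lemma ler_sum_mul_undup (R : numDomainType) (T A B : eqType) (X : seq T)
    (f : T -> A) (g : T -> B) (w : A -> R) (v : B -> R) :
    uniq X -> {in X &, injective (fun x => (f x, g x))} ->
    (forall a, 0 <= w a) -> (forall b, 0 <= v b) ->
  \sum_(x <- X) w (f x) * v (g x) <=
    (\sum_(a <- undup (map f X)) w a) * (\sum_(b <- undup (map g X)) v b).
Proof.
move=> uX fg_inj w_ge0 v_ge0; rewrite big_distrl /=.
under [X in _ <= X]eq_bigr do rewrite big_distrr /=.
rewrite -(big_allpairs (F := fun y : A * B => w y.1 * v y.2)).
rewrite -(big_map (fun x => (f x, g x)) xpredT (fun y : A * B => w y.1 * v y.2)).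
apply: ler_sum_uniq_subset.
- by rewrite map_inj_in_uniq.
- by apply: allpairs_uniq; rewrite ?undup_uniq // => -[? ?] [? ?].
- move=> _ /mapP[x xX ->]; apply: (allpairs_f pair); rewrite mem_undup; exact: map_f.
- by move=> y; rewrite mulr_ge0.
Qed.

Definition ktree (k n : nat) (t : ptree) : bool :=
  leaves_at k.+1 t && (nleaves t == n).

Definition kforest (k n m : nat) (cs : seq ptree) : bool :=
  [&& size cs == m, all (leaves_at k.+1) cs & sumn (map nleaves cs) == n].

Lemma kforest_cons k n m c cs :
  kforest k n m.+1 (c :: cs) -> leaves_at k.+1 c /\ kforest k (n - nleaves c) m cs.
Proof.
rewrite /kforest /= => /and3P[/eqP[->] /andP[-> ->] /eqP <-].
by rewrite eqxx addKn eqxx.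
Qed.

Lemma kforest_head_behead k n m cs :
  kforest k n m.+1 cs -> cs = head leaf cs :: behead cs.
Proof. by case: cs. Qed.

Lemma size_le_sumn_nleaves cs : (size cs <= sumn (map nleaves cs))%N.
Proof. by elim: cs => //= c cs IH; rewrite -add1n leq_add // nleaves_gt0. Qed.

Definition children (t : ptree) : seq ptree := let: Node cs := t in cs.

Lemma children_inj : injective children.
Proof. by case=> cs [cs'] /= ->. Qed.

Lemma ktreeS k n t : ktree k.+1 n t = (children t != [::]) &&
  kforest k n (size (children t)) (children t).
Proof.
case: t => -[|c cs] //; rewrite /ktree /kforest leaves_atS nleaves_Node //=.
by rewrite eqxx.
Qed.

Section TranSum.
Variables (R : realFieldType) (p : nat).

Definition tran_sum_bound k : Prop :=
  forall (S : {set 'I_p}) (s : seq ptree), uniq s -> {in s, forall t, ktree k #|S| t} ->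
  \sum_(t <- s) #|S|`!%:R / (tran t)%:R <= #|klevel k S|%:R :> R.

(* The binomial coefficient ['C(n, a)] counts the blocks [B] of size [a]. *)
Lemma fact_div_prod_tran_cons (S : {set 'I_p}) c cs :
    (nleaves c + sumn (map nleaves cs))%N = #|S| ->
  #|S|`!%:R / (\prod_(x <- c :: cs) tran x)%:R =
  \sum_(B : {set 'I_p} | (B \subset S) && (B != set0))
     (if #|B| == nleaves c then
        (#|B|`!%:R / (tran c)%:R) * (#|S :\: B|`!%:R / (\prod_(x <- cs) tran x)%:R)
      else 0) :> R.
Proof.
move=> sum_leaves; set a := nleaves c; set n := #|S|.
have a_gt0 : (0 < a)%N := nleaves_gt0 c.
have a_le_n : (a <= n)%N by rewrite /n -sum_leaves leq_addr.
rewrite -big_mkcondr /= (eq_bigr (fun _ =>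
    (a`!%:R / (tran c)%:R) * ((n - a)`!%:R / (\prod_(x <- cs) tran x)%:R))); last first.
  by move=> B /andP[/andP[BS _] /eqP <-]; rewrite cardsD (setIidPr BS).
rewrite sumr_const.
have -> : #|[pred B : {set 'I_p} | (B \subset S) && (B != set0) && (#|B| == a)]| = 'C(n, a).
  rewrite -cards_draws; apply: eq_card => B; rewrite !inE /=.
  have [->|_] := eqVneq B set0; last by rewrite andbT.
  by rewrite cards0 eq_sym (negbTE (lt0n_neq0 a_gt0)) !andbF.
have tran_c_neq0 : (tran c)%:R != 0 :> R by rewrite pnatr_eq0 -lt0n tran_gt0.
have tran_cs_neq0 : (\prod_(x <- cs) tran x)%:R != 0 :> R.
  by rewrite pnatr_eq0 -lt0n big_seq prodn_cond_gt0 // => x _; apply: tran_gt0.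
rewrite big_cons natrM -(bin_fact a_le_n) !natrM -mulr_natl.
by field; rewrite tran_c_neq0 tran_cs_neq0.
Qed.

Lemma sum_forest0_le k (S : {set 'I_p}) (X : seq (seq ptree)) :
    uniq X -> {in X, forall cs, kforest k #|S| 0 cs} ->
  \sum_(cs <- X) #|S|`!%:R / (\prod_(c <- cs) tran c)%:R <= (S == set0)%:R :> R.
Proof.
move=> uX X_forest.
have X_nil cs : cs \in X -> cs = [::] by move/X_forest/and3P => [/eqP/size0nil].
case: X uX X_forest X_nil => [|cs [|cs' X]] uX X_forest X_nil.
- by rewrite big_nil ler0n.
- have /and3P[_ _ /eqP] := X_forest cs (mem_head _ _).
  rewrite (X_nil cs (mem_head _ _)) big_seq1 big_nil /= => /esym/cards0_eq ->.
  by rewrite cards0 eqxx divr1.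
- have cs'_X : cs' \in [:: cs, cs' & X] by rewrite inE mem_head orbT.
  move: uX; rewrite cons_uniq (X_nil cs (mem_head _ _)) -(X_nil cs' cs'_X).
  by rewrite mem_head.
Qed.

Section Step.
Variable k : nat.
Hypothesis tran_sum_bound_k : tran_sum_bound k.

Lemma sum_forest_le m (S : {set 'I_p}) (X : seq (seq ptree)) :
    uniq X -> {in X, forall cs, kforest k #|S| m cs} ->
  \sum_(cs <- X) #|S|`!%:R / (\prod_(c <- cs) tran c)%:R
    <= (ordered_decorations k S m)%:R :> R.
Proof.
elim: m S X => [|m IH] S X uX X_forest; first exact: sum_forest0_le uX X_forest.
have X_cons cs : cs \in X -> cs = head leaf cs :: behead cs.
  by move/X_forest/kforest_head_behead.
pose w (B : {set 'I_p}) c : R := #|B|`!%:R / (tran c)%:R.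
pose v (B : {set 'I_p}) cs : R := #|S :\: B|`!%:R / (\prod_(x <- cs) tran x)%:R.
have w_ge0 B c : 0 <= w B c by rewrite divr_ge0.
have v_ge0 B cs : 0 <= v B cs by rewrite divr_ge0.
rewrite (eq_big_seq (fun cs => \sum_(B : {set 'I_p} | (B \subset S) && (B != set0))
   (if #|B| == nleaves (head leaf cs) then w B (head leaf cs) * v B (behead cs)
    else 0))); last first.
  move=> cs csX; rewrite {1}(X_cons cs csX); apply: fact_div_prod_tran_cons.
  by have /and3P[_ _ /eqP] := X_forest cs csX; rewrite {1}(X_cons cs csX).
rewrite exchange_big /= natr_sum; apply: ler_sum => B /andP[BS _].
rewrite -big_mkcond -big_filter /= natrM.
set XB := [seq cs <- X | #|B| == nleaves (head leaf cs)].
have XB_forest cs : cs \in XB ->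
    ktree k #|B| (head leaf cs) /\ kforest k #|S :\: B| m (behead cs).
  rewrite mem_filter => /andP[/eqP eqB /[dup] csX /X_forest].
  rewrite (X_cons cs csX) => /kforest_cons[c_leaves tail_forest].
  by rewrite /ktree c_leaves -eqB eqxx cardsD (setIidPr BS) eqB.
apply: le_trans (ler_sum_mul_undup _ _ (w_ge0 B) (v_ge0 B)) _.
- exact: filter_uniq.
- move=> cs cs'; rewrite !mem_filter => /andP[_ csX] /andP[_ cs'X] [eq_head eq_behead].
  by rewrite (X_cons cs csX) (X_cons cs' cs'X) eq_head eq_behead.
apply: ler_pM; rewrite ?sumr_ge0 //.
  apply: tran_sum_bound_k; first exact: undup_uniq.
  by move=> t; rewrite mem_undup => /mapP[cs /XB_forest[? _] ->].
apply: IH; first exact: undup_uniq.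
by move=> cs'; rewrite mem_undup => /mapP[cs /XB_forest[_ ?] ->].
Qed.
End Step.

Lemma tran_sum_bound0 : tran_sum_bound 0.
Proof.
move=> S s us s_trees; set star := Node (nseq #|S| leaf).
have s_star t : t \in s -> t = star.
  by move=> /s_trees /andP[/leaves_at1 + /eqP n_t]; rewrite n_t.
have tran_star : tran star = #|S|`!.
  by rewrite tranE size_nseq big1_seq ?muln1 // => c /andP[_ /nseqP[-> _]].
rewrite (eq_big_seq (fun _ => 1%:R)); last first.
  by move=> t /s_star ->; rewrite tran_star divff // pnatr_eq0 -lt0n fact_gt0.
rewrite -natr_sum sum1_size card_klevel0 ler_nat.
by apply: (@uniq_leq_size _ _ [:: star]) => // t /s_star ->; rewrite mem_head.
Qed.

Lemma tran_sum_boundS k : tran_sum_bound k -> tran_sum_bound k.+1.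
Proof.
move=> IHk S s us s_trees; set n := #|S|.
have s_forest t : t \in s -> kforest k n (size (children t)) (children t).
  by move/s_trees; rewrite ktreeS => /andP[].
have size_children t : t \in s -> (size (children t) < n.+1)%N.
  by move/s_forest/and3P => [_ _ /eqP <-]; rewrite ltnS size_le_sumn_nleaves.
rewrite (eq_bigr (fun t => (size (children t))`!%:R^-1 *
    (n`!%:R / (\prod_(c <- children t) tran c)%:R))); last first.
  by case=> cs _; rewrite tranE natrM invfM /=; ring.
rewrite (partition_big (fun t => inord (size (children t)) : 'I_n.+1) xpredT) //=.
apply: (@le_trans _ _ (\sum_(j < n.+1) (decorated_partitions k S j)%:R)); last first.
  by rewrite -natr_sum ler_nat sum_decorated_partitions_le.
apply: ler_sum => j _.
rewrite big_seq_cond (eq_bigl (fun t => (t \in s) && (size (children t) == j))); last first.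
  by move=> t; case: (boolP (t \in s)) => //= ts; rewrite -val_eqE /= inordK ?size_children.
rewrite (eq_bigr (fun t => (j`!%:R)^-1 *
    (n`!%:R / (\prod_(c <- children t) tran c)%:R))); last by move=> t /andP[_ /eqP ->].
rewrite -big_distrr -big_filter /=.
rewrite -(big_map children xpredT (fun cs => n`!%:R / (\prod_(c <- cs) tran c)%:R)).
rewrite ler_pdivrMl ?ltr0n ?fact_gt0 // -natrM.
apply: le_trans (_ : _ <= (ordered_decorations k S j)%:R) _.
  apply: sum_forest_le => //.
    by rewrite (map_inj_uniq children_inj) filter_uniq.
  by move=> cs /mapP[t]; rewrite mem_filter => /andP[/andP[_ /eqP <-] /s_forest ? ->].
by rewrite ler_nat ordered_decorations_le.
Qed.

Lemma tran_sum_boundP k : tran_sum_bound k.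
Proof. by elim: k => [|k]; [apply: tran_sum_bound0 | apply: tran_sum_boundS]. Qed.
End TranSum.

Lemma natr_exp_le_expR_fact (R : realType) n :
  (n%:R : R) ^+ n <= expR 1 ^+ n * n`!%:R.
Proof.
case: n => [|n]; first by rewrite !expr0 mul1r.
rewrite -ler_pdivrMr ?ltr0n ?fact_gt0 // -expRM_natl mulr1.
by apply: le_trans (expR_ge1Dxn n (ler0n _ _)); rewrite lerDr.
Qed.

Lemma exp_div_le_fact_div (R : realType) (C : R) p :
  1 <= C ^+ p -> (p%:R / (expR 1 * C ^+ 2)) ^+ p <= p`!%:R / C ^+ p.
Proof.
move=> Cp_ge1; have Cp_gt0 : 0 < C ^+ p := lt_le_trans ltr01 Cp_ge1.
have e_gt0 : 0 < expR 1 ^+ p :> R by rewrite exprn_gt0 ?expR_gt0.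
rewrite expr_div_n exprMn -exprM mulnC exprM invfM mulrA.
apply: ler_pM.
- by rewrite divr_ge0 ?exprn_ge0 ?ler0n ?expR_ge0.
- by rewrite invr_ge0 exprn_ge0 ?ltW.
- by rewrite ler_pdivrMr // mulrC natr_exp_le_expR_fact.
- rewrite lef_pV2 ?posrE ?(exprn_gt0 _ Cp_gt0) // expr2.
  exact: ler_peMl (ltW Cp_gt0) Cp_ge1.
Qed.

Lemma ler_mul_powR_inv (R : realType) (b N x : R) (p : nat) :
    (0 < p)%N -> 0 <= N -> 0 <= x -> N * x ^+ p <= b ->
  x * N `^ p%:R^-1 <= b `^ p%:R^-1.
Proof.
move=> p_gt0 N_ge0 x_ge0 le_b; have Nx_ge0 : 0 <= N * x ^+ p by rewrite mulr_ge0 ?exprn_ge0.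
apply: le_trans (ge0_ler_powR _ Nx_ge0 _ le_b); rewrite ?invr_ge0 ?ler0n //; last first.
  exact: le_trans le_b.
rewrite powRM ?exprn_ge0 // mulrC -powR_mulrn // -powRrM divff ?powRr1 //.
by rewrite pnatr_eq0 -lt0n.
Qed.

Lemma pairwise_distinct_uniq s : pairwise_distinct s -> uniq s.
Proof. by move=> s_distinct; apply/(uniqP leaf) => i j; apply: s_distinct. Qed.

Lemma card_mul_fact_div_le_bk (R : realType) (C : R) k p s :
    0 < C -> uniq s -> all (fun t => is_kp_tree k p t && nice C p t) s ->
  (size s)%:R * (p`!%:R / C ^+ p) <= (bk k p)%:R.
Proof.
move=> C_gt0 us /allP s_nice.
have s_trees : {in s, forall t, ktree k #|[set: 'I_p]| t}.
  move=> t /s_nice /andP[/andP[/eqP n_t leaves_t] _].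
  by rewrite /ktree cardsT card_ord /nleaves n_t eqxx andbT.
have := @tran_sum_boundP R p k [set: 'I_p] s us s_trees.
rewrite cardsT card_ord -bkE; apply: le_trans.
rewrite -sum1_size natr_sum mulr_suml big_seq [X in _ <= X]big_seq.
apply: ler_sum => t /s_nice /andP[_ nice_t]; rewrite mul1r ler_pM2l ?ltr0n ?fact_gt0 //.
by rewrite lef_pV2 ?posrE ?ltr0n ?tran_gt0 ?exprn_gt0.
Qed.

Theorem claim9p3 (R : realType) (C : R) (k p : nat) (s : seq ptree) :
  0 < C ->
  all (fun t => is_kp_tree k p t && nice C p t) s ->
  pairwise_distinct s ->
  (bk k p)%:R `^ (p%:R^-1) >= p%:R / (expR 1 * C ^+ 2) * (size s)%:R `^ (p%:R^-1).
Proof.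
move=> C_gt0 s_nice /pairwise_distinct_uniq us.
have [->|p_gt0] := posnP p; first by rewrite !mul0r powR_ge0.
have [->|s_neq0] := eqVneq s [::].
  by rewrite powR0 ?mulr0 ?powR_ge0 // invr_eq0 pnatr_eq0 -lt0n.
have Cp_ge1 : 1 <= C ^+ p.
  case: s s_neq0 s_nice {us} => // t s' _ /andP[/andP[_ nice_t] _].
  by apply: le_trans nice_t; rewrite ler1n tran_gt0.
apply: ler_mul_powR_inv => //.
  by rewrite divr_ge0 // mulr_ge0 ?expR_ge0 // exprn_ge0 // ltW.
apply: le_trans (card_mul_fact_div_le_bk C_gt0 us s_nice).
by rewrite ler_wpM2l // exp_div_le_fact_div.
Qed.
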